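(* Let $\alpha\ge 9$ be a number of the form $N^2$ or $N(N+1)$ with $N$ a positive integer. If $m(t_\alpha)+t_\alpha=\alpha$, then $g(t_\alpha)>m(t_\alpha)$ and $h_\alpha\le t_\alpha-1$.
   Context: A polyomino is a finite union of closed unit squares (tiles) of the square lattice, any two meeting (if at all) in a whole edge, whose interior is connected; its holes are the bounded components of its complement. For $h\ge1$, $g(h)$ is the minimum number of tiles of a polyomino with $h$ holes. Let $M(n,h)=\frac{2n+2-2\lceil 2\sqrt{n+h}\,\rceil}{4}$, $m(h)=\min\{n\ge1: M(n,h)\ge h\}$, and $t_\alpha=\max\{h\ge1: m(h)+h\le\alpha\}$ (nonempty since $m(1)=7$). For $\alpha=N^2$ (resp. $N(N+1)$), $h_\alpha$ is the maximum number of holes of a polyomino contained in the $N\times N$ square (resp. $N\times(N+1)$ rectangle). *)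

(* cells of the square lattice are pairs of integers (Z*Z);
   the cell (x,y) stands for the closed unit square [x,x+1] x [y,y+1]. *)
From Stdlib Require Import ZArith Reals List Relations ClassicalEpsilon.
Import ListNotations.

Definition cell := (Z * Z)%type.

Definition adj (a b : cell) : Prop :=
  (Z.abs (fst a - fst b) + Z.abs (snd a - snd b) = 1)%Z.

(* A polyomino: a nonempty finite set of tiles (duplicate-free list) whose
   interior is connected, i.e. the tiles are connected through shared edges. *)
Definition polyomino (P : list cell) : Prop :=
  P <> [] /\ NoDup P /\
  forall a b, In a P -> In b P ->
    clos_refl_trans cell (fun x y => In x P /\ In y P /\ adj x y) a b.

Definition tiles (P : list cell) : nat := length P.

Definition cconn (P : list cell) : relation cell :=
  clos_refl_trans cell (fun x y => ~ In x P /\ ~ In y P /\ adj x y).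

Definition in_hole (P : list cell) (c : cell) : Prop :=
  ~ In c P /\
  exists R : Z, forall d, cconn P c d -> (Z.abs (fst d) <= R /\ Z.abs (snd d) <= R)%Z.

(* P has exactly h holes (bounded components of the complement):
   there is a list of h representatives, one in each bounded component. *)
Definition has_holes (P : list cell) (h : nat) : Prop :=
  exists reps : list cell,
    length reps = h /\ NoDup reps /\
    (forall r, In r reps -> in_hole P r) /\
    (forall r1 r2, In r1 reps -> In r2 reps -> cconn P r1 r2 -> r1 = r2) /\
    (forall c, in_hole P c -> exists r, In r reps /\ cconn P r c).

Definition in_rect (a b : nat) (P : list cell) : Prop :=
  forall c, In c P ->
    (0 <= fst c < Z.of_nat a)%Z /\ (0 <= snd c < Z.of_nat b)%Z.

(* ceiling of a real number (Stdlib's up x is floor x + 1) *)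
Definition ceilR (x : R) : Z := (1 - up (- x))%Z.

Definition M (n h : nat) : R :=
  ((2 * INR n + 2 - 2 * IZR (ceilR (2 * sqrt (INR (n + h))))) / 4)%R.

Definition m (h : nat) : nat :=
  epsilon (inhabits 0%nat) (fun k =>
    (1 <= k)%nat /\ (M k h >= INR h)%R /\
    forall n, (1 <= n)%nat -> (M n h >= INR h)%R -> (k <= n)%nat).

Definition t (alpha : nat) : nat :=
  epsilon (inhabits 0%nat) (fun s =>
    (1 <= s)%nat /\ (m s + s <= alpha)%nat /\
    forall h, (1 <= h)%nat -> (m h + h <= alpha)%nat -> (h <= s)%nat).

(* A polyomino with n tiles and k holes spanning X columns and Y rows satisfies
   n + k <= XY, since tiles and holes are distinct cells of its bounding box.
   Its perimeter 4n - 2E, where E counts shared edges, contains in each of the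
   four directions one edge per hole and one per row or column, so
   4k + 2X + 2Y <= 4n - 2E, and E >= n - 1 by connectivity.  With
   4(n + k) <= (X + Y)^2 this gives ceil(2 sqrt(n + k)) <= X + Y <= n + 1 - 2k,
   i.e. M(n, k) >= k, hence n >= m(k).
   Let t = t_alpha and suppose some polyomino with t holes has n = m(t) =
   alpha - t tiles.  Minimality of m(t) gives n - 2t < ceil(2 sqrt(alpha - 1))
   <= N + w, which forces X + Y <= N + w and then XY <= alpha = n + t: tiles and
   holes fill the bounding box.  Its border is then made of tiles and forms a
   cycle, so E >= n and X + Y <= n - 2t < ceil(2 sqrt(alpha - 1)) <= X + Y, a
   contradiction.  Finally a polyomino in the N x w rectangle with k >= t holes
   has m(k) + k <= n + k <= alpha, so k = t and n = m(t), which was just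
   excluded. *)

From Stdlib Require Import ZArith Reals List Relations ClassicalEpsilon.
From Stdlib Require Import Bool Lia Lra Permutation FinFun Classical.
Import ListNotations.

Lemma nat_least (Q : nat -> Prop) :
  (exists n, Q n) -> exists n, Q n /\ forall k, Q k -> n <= k.
Proof.
  intros Hex.
  destruct (Wf_nat.dec_inh_nat_subset_has_unique_least_element Q (fun n => classic (Q n)) Hex)
    as [n [Hn _]].
  exists n; exact Hn.
Qed.

Lemma nat_greatest (Q : nat -> Prop) (B : nat) :
  (exists n, Q n) -> (forall n, Q n -> n <= B) ->
  exists n, Q n /\ forall k, Q k -> k <= n.
Proof.
  intros [n0 Hn0] HB.
  destruct (nat_least (fun u => forall k, Q k -> k <= u)) as [u [Hu Hmin]]; [eauto|].
  exists u; split; auto.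
  apply NNPP; intros HQu.
  destruct u as [|u].
  - assert (n0 = 0) by (specialize (Hu n0 Hn0); lia). subst; contradiction.
  - assert (Hu' : forall k, Q k -> k <= u).
    { intros k Hk. specialize (Hu k Hk).
      destruct (Nat.eq_dec k (S u)); [subst; contradiction | lia]. }
    specialize (Hmin u Hu'). lia.
Qed.

Lemma rt_path {A : Type} (R : relation A) (f : nat -> A) (L : nat) :
  (forall i, i < L -> R (f i) (f (S i))) -> clos_refl_trans A R (f 0) (f L).
Proof.
  induction L as [|L IH]; intros Hstep; [apply rt_refl|].
  eapply rt_trans; [apply IH; auto | apply rt_step, Hstep; lia].
Qed.

Lemma rt_sym {A : Type} (R : relation A) :
  symmetric A R -> symmetric A (clos_refl_trans A R).
Proof.
  intros Hs x y H.
  induction H; [apply rt_step; auto | apply rt_refl | eapply rt_trans; eauto].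
Qed.

Section ListSums.
Context {A : Type}.

Fixpoint lsum (f : A -> nat) (l : list A) : nat :=
  match l with [] => 0 | x :: l' => f x + lsum f l' end.

Lemma lsum_0 l : lsum (fun _ => 0) l = 0.
Proof. induction l; simpl; auto. Qed.

Lemma lsum_plus f g l : lsum (fun x => f x + g x) l = lsum f l + lsum g l.
Proof. induction l; simpl; lia. Qed.

Lemma lsum_le f g l : (forall x, In x l -> f x <= g x) -> lsum f l <= lsum g l.
Proof.
  induction l as [|a l IH]; simpl; intros H; auto.
  pose proof (H a (or_introl eq_refl)). specialize (IH (fun x Hx => H x (or_intror Hx))). lia.
Qed.

Lemma lsum_ext f g l : (forall x, In x l -> f x = g x) -> lsum f l = lsum g l.
Proof.
  induction l as [|a l IH]; simpl; intros H; [reflexivity|].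
  f_equal; [apply H; left; auto | apply IH; intros x Hx; apply H; right; auto].
Qed.

Lemma lsum_perm f l l' : Permutation l l' -> lsum f l = lsum f l'.
Proof. induction 1; simpl; lia. Qed.

Lemma lsum_ge f l a : In a l -> f a <= lsum f l.
Proof.
  induction l as [|x l IH]; simpl; [tauto|]. intros [->|H]; [lia|]. specialize (IH H); lia.
Qed.

Lemma lsum_ge2 f l a b : NoDup l -> In a l -> In b l -> a <> b -> f a + f b <= lsum f l.
Proof.
  induction l as [|x l IH]; intros Hnd Ha Hb Hab; [contradiction|].
  inversion Hnd as [|? ? Hx Hnd']; subst; simpl.
  destruct Ha as [->|Ha], Hb as [->|Hb].
  - congruence.
  - pose proof (lsum_ge f l b Hb); lia.
  - pose proof (lsum_ge f l a Ha); lia.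
  - specialize (IH Hnd' Ha Hb Hab); lia.
Qed.

Lemma length_filter_lsum (g : A -> bool) l :
  length (filter g l) = lsum (fun x => Nat.b2n (g x)) l.
Proof. induction l as [|a l IH]; simpl; auto. destruct (g a); simpl; lia. Qed.

Lemma exists_min_Z (f : A -> Z) l :
  l <> [] -> exists x, In x l /\ forall y, In y l -> (f x <= f y)%Z.
Proof.
  induction l as [|a l IH]; intros Hne; [congruence|].
  destruct l as [|b l].
  - exists a; split; [left; auto|]. intros y [<-|[]]; lia.
  - destruct (IH ltac:(discriminate)) as [x [Hx Hmin]].
    destruct (Z.le_gt_cases (f a) (f x)).
    + exists a; split; [left; auto|]. intros y [<-|Hy]; [lia|]. specialize (Hmin y Hy); lia.
    + exists x; split; [right; auto|]. intros y [<-|Hy]; [lia | auto].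
Qed.

End ListSums.

Lemma NoDup_length_le_rel {A B : Type} (B_eq_dec : forall x y : B, {x = y} + {x <> y})
    (l : list A) (T : list B) (R : A -> B -> Prop) :
  NoDup l -> (forall x, In x l -> exists y, In y T /\ R x y) ->
  (forall x x' y, In x l -> In x' l -> R x y -> R x' y -> x = x') ->
  length l <= length T.
Proof.
  revert T. induction l as [|a l IH]; intros T Hnd Hex Hinj; simpl; [lia|].
  inversion Hnd as [|? ? Ha Hnd']; subst.
  destruct (Hex a (or_introl eq_refl)) as [ya [HyaT Hya]].
  assert (length l <= length (remove B_eq_dec ya T)).
  { apply IH; auto.
    - intros x Hx. destruct (Hex x (or_intror Hx)) as [y [HyT Hy]].
      exists y; split; auto. apply in_in_remove; auto.
      intros ->. assert (x = a) by (apply (Hinj x a ya); simpl; auto). subst; contradiction.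
    - intros x x' y Hx Hx'; apply Hinj; simpl; auto. }
  pose proof (remove_length_lt B_eq_dec T ya HyaT). lia.
Qed.

Section DegreeSum.
Context {A : Type} (eqb : A -> A -> bool).
Hypothesis eqb_spec : forall x y, reflect (x = y) (eqb x y).

Definition degsum (e : A -> A -> bool) (S : list A) : nat :=
  lsum (fun p => lsum (fun q => Nat.b2n (e p q)) S) S.

Definition edge_in (e : A -> A -> bool) (V : list A) : relation A :=
  fun x y => In x V /\ In y V /\ e x y = true.

Definition connected_by (e : A -> A -> bool) (V : list A) : Prop :=
  forall u v, In u V -> In v V -> clos_refl_trans A (edge_in e V) u v.

Lemma edge_in_sym e V : (forall x y, e x y = e y x) -> symmetric A (edge_in e V).
Proof. intros He x y (? & ? & ?); repeat split; auto. rewrite He; auto. Qed.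

Lemma degsum_cons e z S :
  degsum e (z :: S) = Nat.b2n (e z z) + lsum (fun q => Nat.b2n (e z q)) S
                      + lsum (fun p => Nat.b2n (e p z)) S + degsum e S.
Proof. unfold degsum; simpl. rewrite lsum_plus. lia. Qed.

Lemma degsum_perm e S S' : Permutation S S' -> degsum e S = degsum e S'.
Proof.
  intros HS. unfold degsum. rewrite (lsum_perm _ _ _ HS).
  apply lsum_ext; intros; apply lsum_perm; auto.
Qed.

Lemma exists_crossing_step (R : relation A) S s y :
  clos_refl_trans A R s y -> In s S -> ~ In y S ->
  exists x z, In x S /\ ~ In z S /\ R x z.
Proof.
  intros H. apply clos_rt_rt1n in H.
  induction H as [|x y z Hxy _ IH]; intros Hx Hz; [contradiction|].
  destruct (classic (In y S)); [apply IH; auto | exists x, y; auto].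
Qed.

Section Symmetric.
Variable e : A -> A -> bool.
Hypothesis e_sym : forall x y, e x y = e y x.

Lemma degsum_connected_subsets V : NoDup V -> connected_by e V ->
  forall k, 1 <= k <= length V ->
  exists S, NoDup S /\ incl S V /\ length S = k /\ 2 * (k - 1) <= degsum e S.
Proof.
  intros Hnd Hc k. induction k as [|k IH]; intros Hk; [lia|].
  destruct V as [|v0 V0]; [simpl in Hk; lia|].
  destruct (Nat.eq_dec k 0) as [->|Hk0].
  { exists [v0]. repeat split.
    - constructor; [intros []| constructor].
    - intros x [<-|[]]; left; auto.
    - simpl; lia. }
  destruct (IH ltac:(lia)) as [S [HnS [HSV [HlS HdS]]]].
  destruct S as [|s S0]; [simpl in HlS; lia|].
  destruct (classic (exists y, In y (v0 :: V0) /\ ~ In y (s :: S0))) as [[y [HyV HyS]]|Hno].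
  2:{ exfalso. assert (incl (v0 :: V0) (s :: S0)) as Hincl.
      { intros y Hy. apply NNPP; intros Hy'. apply Hno; eauto. }
      apply NoDup_incl_length in Hincl; auto. lia. }
  destruct (exists_crossing_step _ (s :: S0) s y (Hc s y (HSV s (or_introl eq_refl)) HyV)
              (or_introl eq_refl) HyS)
    as [x [z [Hx [Hz [_ [HzV Hxz]]]]]].
  exists (z :: s :: S0). repeat split.
  - constructor; auto.
  - intros w [<-|Hw]; auto.
  - simpl in *; lia.
  - rewrite degsum_cons.
    pose proof (lsum_ge (fun q => Nat.b2n (e z q)) (s :: S0) x Hx) as Hzx.
    pose proof (lsum_ge (fun p => Nat.b2n (e p z)) (s :: S0) x Hx) as Hxz'.
    simpl in Hzx, Hxz' |- *. rewrite e_sym, Hxz in Hzx. rewrite Hxz in Hxz'.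
    simpl in HlS, Hzx, Hxz'. lia.
Qed.

Lemma degsum_connected V : NoDup V -> connected_by e V -> 2 * (length V - 1) <= degsum e V.
Proof.
  intros Hnd Hc. destruct V as [|v0 V0]; [simpl; lia|].
  destruct (degsum_connected_subsets _ Hnd Hc (length (v0 :: V0))) as [S [HnS [HSV [HlS HdS]]]];
    [simpl; lia|].
  rewrite <- (degsum_perm e S); [lia|].
  apply NoDup_Permutation_bis; auto; lia.
Qed.

End Symmetric.

Section DropEdge.
Variable e : A -> A -> bool.
Hypothesis e_sym : forall x y, e x y = e y x.

Definition is_pair (a b p q : A) : bool := eqb p a && eqb q b || eqb p b && eqb q a.

Definition drop_edge (a b : A) (p q : A) : bool := e p q && negb (is_pair a b p q).

Lemma is_pair_spec a b p q :
  reflect ((p = a /\ q = b) \/ (p = b /\ q = a)) (is_pair a b p q).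
Proof.
  unfold is_pair.
  destruct (eqb_spec p a), (eqb_spec q b), (eqb_spec p b), (eqb_spec q a);
    simpl; constructor; tauto.
Qed.

Lemma drop_edge_sym a b p q : drop_edge a b p q = drop_edge a b q p.
Proof.
  unfold drop_edge. rewrite e_sym. f_equal. f_equal.
  destruct (is_pair_spec a b p q), (is_pair_spec a b q p); tauto.
Qed.

Lemma degsum_drop_edge V a b : NoDup V -> In a V -> In b V -> a <> b -> e a b = true ->
  degsum (drop_edge a b) V + 2 <= degsum e V.
Proof.
  intros Hnd Ha Hb Hab Heab.
  assert (Hpt : forall p q,
    Nat.b2n (drop_edge a b p q) + Nat.b2n (is_pair a b p q) <= Nat.b2n (e p q)).
  { intros p q. unfold drop_edge.
    destruct (is_pair_spec a b p q) as [[[-> ->]|[-> ->]]|_].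
    - rewrite Heab; simpl; lia.
    - rewrite e_sym, Heab; simpl; lia.
    - rewrite andb_true_r; simpl; lia. }
  assert (Hpairs : 2 <= lsum (fun p => lsum (fun q => Nat.b2n (is_pair a b p q)) V) V).
  { pose proof (lsum_ge2 (fun p => lsum (fun q => Nat.b2n (is_pair a b p q)) V) V a b
                  Hnd Ha Hb Hab) as H.
    pose proof (lsum_ge (fun q => Nat.b2n (is_pair a b a q)) V b Hb) as Hab'.
    pose proof (lsum_ge (fun q => Nat.b2n (is_pair a b b q)) V a Ha) as Hba'.
    simpl in H, Hab', Hba'.
    destruct (is_pair_spec a b a b) as [_|F]; [|tauto].
    destruct (is_pair_spec a b b a) as [_|F]; [|tauto].
    simpl in Hab', Hba'. lia. }
  unfold degsum.
  eapply Nat.le_trans; [|apply lsum_le; intros p _; apply lsum_le; intros q _; apply Hpt].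
  rewrite (lsum_ext
    (fun p => lsum (fun q => Nat.b2n (drop_edge a b p q) + Nat.b2n (is_pair a b p q)) V)
    (fun p => lsum (fun q => Nat.b2n (drop_edge a b p q)) V
              + lsum (fun q => Nat.b2n (is_pair a b p q)) V))
    by (intros; apply lsum_plus).
  rewrite lsum_plus. lia.
Qed.

(* Dropping an edge that lies on a cycle keeps the graph connected. *)
Lemma degsum_cycle V a b : NoDup V -> connected_by e V ->
  In a V -> In b V -> a <> b -> e a b = true ->
  clos_refl_trans A (edge_in (drop_edge a b) V) a b ->
  2 * length V <= degsum e V.
Proof.
  intros Hnd Hc Ha Hb Hab Heab Hcyc.
  pose proof (edge_in_sym (drop_edge a b) V (drop_edge_sym a b)) as Hsym.
  assert (Hc' : connected_by (drop_edge a b) V).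
  { intros u v Hu Hv. specialize (Hc u v Hu Hv). clear Hu Hv.
    induction Hc as [x y (Hx & Hy & Hxy)| |]; [|apply rt_refl | eapply rt_trans; eauto].
    destruct (drop_edge a b x y) eqn:Hd; [apply rt_step; repeat split; auto|].
    unfold drop_edge in Hd. rewrite Hxy in Hd.
    destruct (is_pair_spec a b x y) as [[[-> ->]|[-> ->]]|]; [auto | apply rt_sym; auto |].
    simpl in Hd; discriminate. }
  pose proof (degsum_connected (drop_edge a b) (drop_edge_sym a b) V Hnd Hc').
  pose proof (degsum_drop_edge V a b Hnd Ha Hb Hab Heab).
  destruct V as [|v0 V0]; [contradiction|].
  simpl in *. lia.
Qed.

End DropEdge.
End DegreeSum.

Definition cell_eqb (u v : cell) : bool := Z.eqb (fst u) (fst v) && Z.eqb (snd u) (snd v).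

Lemma cell_eqb_spec u v : reflect (u = v) (cell_eqb u v).
Proof.
  destruct u as [a b], v as [c d]; unfold cell_eqb; simpl.
  destruct (Z.eqb_spec a c), (Z.eqb_spec b d); constructor; congruence.
Qed.

Definition cell_eq_dec (u v : cell) : {u = v} + {u <> v} :=
  reflect_dec _ _ (cell_eqb_spec u v).

Definition memb (c : cell) (l : list cell) : bool :=
  if in_dec cell_eq_dec c l then true else false.

Lemma memb_spec c l : reflect (In c l) (memb c l).
Proof. unfold memb; destruct (in_dec cell_eq_dec c l); constructor; auto. Qed.

Definition adjb (a b : cell) : bool :=
  Z.eqb (Z.abs (fst a - fst b) + Z.abs (snd a - snd b)) 1.

Lemma adjb_spec a b : reflect (adj a b) (adjb a b).
Proof. unfold adjb, adj. apply Z.eqb_spec. Qed.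

Lemma adjb_sym a b : adjb a b = adjb b a.
Proof. unfold adjb. f_equal. lia. Qed.

Definition dirs : list cell := [(1, 0); (-1, 0); (0, 1); (0, -1)]%Z.

Definition opp_dir (d : cell) : cell := (- fst d, - snd d)%Z.

Definition shift (c : cell) (j : Z) (d : cell) : cell :=
  (fst c + j * fst d, snd c + j * snd d)%Z.

(* For a direction d, [line_of d] indexes the lines parallel to d and
   [pos_along d] is the coordinate along them. *)
Definition line_of (d c : cell) : Z := if Z.eqb (fst d) 0 then fst c else snd c.

Definition pos_along (d c : cell) : Z := (fst c * fst d + snd c * snd d)%Z.

Local Ltac case_dir H := simpl in H; destruct H as [<-|[<-|[<-|[<-|[]]]]].

Lemma opp_dir_dirs d : In d dirs -> In (opp_dir d) dirs.
Proof. intros H; case_dir H; simpl; auto. Qed.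

Lemma shift_0 c d : shift c 0 d = c.
Proof. destruct c; unfold shift; simpl; f_equal; lia. Qed.

Lemma shift_shift c i j d : shift (shift c i d) j d = shift c (i + j) d.
Proof. destruct c; unfold shift; simpl; f_equal; lia. Qed.

Lemma shift_opp_dir c j d : shift c j (opp_dir d) = shift c (- j) d.
Proof. destruct c; unfold shift, opp_dir; simpl; f_equal; lia. Qed.

Lemma line_of_shift d c j : In d dirs -> line_of d (shift c j d) = line_of d c.
Proof. intros H; case_dir H; destruct c; unfold line_of, shift; simpl; lia. Qed.

Lemma pos_along_shift d c j : In d dirs -> pos_along d (shift c j d) = (pos_along d c + j)%Z.
Proof. intros H; case_dir H; destruct c; unfold pos_along, shift; simpl; lia. Qed.

Lemma adj_shift d c j : In d dirs -> adj (shift c j d) (shift c (j + 1) d).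
Proof. intros H; case_dir H; destruct c; unfold adj, shift; simpl; lia. Qed.

Lemma segment_path (R : relation cell) c d (L : Z) : (0 <= L)%Z ->
  (forall j, (0 <= j < L)%Z -> R (shift c j d) (shift c (j + 1) d)) ->
  clos_refl_trans cell R c (shift c L d).
Proof.
  intros HL Hstep.
  rewrite <- (shift_0 c d) at 1. rewrite <- (Z2Nat.id L HL).
  apply (rt_path R (fun i => shift c (Z.of_nat i) d)).
  intros i Hi. rewrite Nat2Z.inj_succ, <- Z.add_1_r. apply Hstep. lia.
Qed.

Lemma adjb_as_shifts p q :
  Nat.b2n (adjb p q) = lsum (fun d => Nat.b2n (cell_eqb q (shift p (-1) d))) dirs.
Proof.
  destruct p as [x y], q as [x' y']. unfold adjb, cell_eqb, shift; simpl.
  repeat match goal with |- context [Z.eqb ?a ?b] => destruct (Z.eqb_spec a b) end;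
    simpl; lia.
Qed.

Lemma lsum_cell_eqb l c : NoDup l ->
  lsum (fun q => Nat.b2n (cell_eqb q c)) l = Nat.b2n (memb c l).
Proof.
  induction l as [|x l IH]; intros Hnd; [reflexivity|].
  inversion Hnd as [|? ? Hx Hnd']; subst. simpl. rewrite IH by auto.
  destruct (memb_spec c l), (memb_spec c (x :: l)), (cell_eqb_spec x c);
    subst; simpl in *; intuition.
Qed.

Section Polyomino.
Variable P : list cell.

Lemma cconn_sym a b : cconn P a b -> cconn P b a.
Proof. apply rt_sym. intros x y (? & ? & ?); repeat split; auto. unfold adj in *; lia. Qed.

Lemma cconn_free_segment c d (L : Z) : In d dirs -> (0 <= L)%Z ->
  (forall j, (0 <= j <= L)%Z -> ~ In (shift c j d) P) -> cconn P c (shift c L d).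
Proof.
  intros Hd HL Hfree. apply segment_path; auto.
  intros j Hj. repeat split; [apply Hfree; lia | apply Hfree; lia | apply adj_shift; auto].
Qed.

Definition outside (c : cell) : Prop := forall r, in_hole P r -> ~ cconn P r c.

Lemma free_ray_outside c d : In d dirs ->
  (forall j, (0 <= j)%Z -> ~ In (shift c j d) P) -> outside c.
Proof.
  intros Hd Hray r [_ [B HB]] Hrc.
  assert (HB0 : (0 <= B)%Z) by (destruct (HB r (rt_refl _ _ _)); lia).
  set (L := (B + Z.abs (fst c) + Z.abs (snd c) + 1)%Z).
  assert (Hfar : cconn P r (shift c L d)).
  { eapply rt_trans; [exact Hrc|]. apply cconn_free_segment; auto; [lia|].
    intros j Hj; apply Hray; lia. }
  destruct (HB _ Hfar) as [H1 H2]. unfold shift, L in H1, H2.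
  case_dir Hd; simpl in H1, H2; lia.
Qed.

Lemma first_tile_on_ray r d : In d dirs -> in_hole P r ->
  exists j, (0 <= j)%Z /\ In (shift r (j + 1) d) P /\ ~ In (shift r j d) P /\
            cconn P r (shift r j d).
Proof.
  intros Hd Hr.
  assert (Hex : exists i, In (shift r (Z.of_nat i) d) P).
  { apply NNPP; intros Hno.
    apply (free_ray_outside r d Hd) with (r := r); [|auto | apply rt_refl].
    intros j Hj Hin. apply Hno. exists (Z.to_nat j). rewrite Z2Nat.id; auto. }
  destruct (nat_least _ Hex) as [[|i] [Hi Hmin]].
  - rewrite shift_0 in Hi. destruct Hr; contradiction.
  - assert (Hfree : forall j, (0 <= j <= Z.of_nat i)%Z -> ~ In (shift r j d) P).
    { intros j Hj Hin. specialize (Hmin (Z.to_nat j)). rewrite Z2Nat.id in Hmin by lia.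
      specialize (Hmin Hin). lia. }
    rewrite Nat2Z.inj_succ, <- Z.add_1_r in Hi.
    exists (Z.of_nat i). repeat split; auto; [lia | apply Hfree; lia |].
    apply cconn_free_segment; auto; lia.
Qed.

Lemma hole_tile_beyond c d : In d dirs -> in_hole P c ->
  exists p, In p P /\ (pos_along d c < pos_along d p)%Z.
Proof.
  intros Hd Hc. destruct (first_tile_on_ray c d Hd Hc) as [j [Hj [Hin _]]].
  exists (shift c (j + 1) d); split; auto. rewrite pos_along_shift; auto; lia.
Qed.

Definition hole_reps (reps : list cell) : Prop :=
  NoDup reps /\ (forall r, In r reps -> in_hole P r) /\
  (forall r1 r2, In r1 reps -> In r2 reps -> cconn P r1 r2 -> r1 = r2).

Lemma has_holes_reps k : has_holes P k -> exists reps, length reps = k /\ hole_reps reps.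
Proof.
  intros (reps & Hlen & Hnd & Hholes & Hdist & _).
  exists reps; split; [|split; [|split]]; auto.
Qed.

Definition exposed (d : cell) : list cell :=
  filter (fun p => negb (memb (shift p (-1) d) P)) P.

Definition covered (d : cell) : list cell :=
  filter (fun p => memb (shift p (-1) d) P) P.

Definition lines (d : cell) : list Z := nodup Z.eq_dec (map (line_of d) P).

Lemma in_exposed p d : In p (exposed d) <-> In p P /\ ~ In (shift p (-1) d) P.
Proof.
  unfold exposed. rewrite filter_In.
  destruct (memb_spec (shift p (-1) d) P); simpl; intuition discriminate.
Qed.

Lemma hole_exposes r d : In d dirs -> in_hole P r ->
  exists p, In p (exposed d) /\ cconn P r (shift p (-1) d).
Proof.
  intros Hd Hr. destruct (first_tile_on_ray r d Hd Hr) as [j [Hj [Hin [Hfree Hconn]]]].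
  exists (shift r (j + 1) d). rewrite in_exposed, shift_shift.
  replace (j + 1 + -1)%Z with j by lia. auto.
Qed.

Lemma line_exposes z d : In d dirs -> In z (lines d) ->
  exists p, In p (exposed d) /\ line_of d p = z /\ outside (shift p (-1) d).
Proof.
  intros Hd Hz.
  destruct (exists_min_Z (pos_along d) (filter (fun q => Z.eqb (line_of d q) z) P))
    as [p [Hp Hmin]].
  { unfold lines in Hz. apply nodup_In, in_map_iff in Hz. destruct Hz as [q [Hq HqP]].
    intros Hnil. assert (Hq' : In q (filter (fun q => Z.eqb (line_of d q) z) P)).
    { apply filter_In; split; auto. apply Z.eqb_eq; auto. }
    rewrite Hnil in Hq'; contradiction. }
  apply filter_In in Hp. destruct Hp as [HpP Hpz]. apply Z.eqb_eq in Hpz.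
  assert (Hray : forall j, (0 <= j)%Z -> ~ In (shift (shift p (-1) d) j (opp_dir d)) P).
  { intros j Hj Hin. rewrite shift_opp_dir, shift_shift in Hin.
    assert (Hin' : In (shift p (-1 + - j) d) (filter (fun q => Z.eqb (line_of d q) z) P)).
    { apply filter_In; split; auto. apply Z.eqb_eq. rewrite line_of_shift; auto. }
    specialize (Hmin _ Hin'). rewrite pos_along_shift in Hmin; auto. lia. }
  exists p. rewrite in_exposed. repeat split; auto.
  - specialize (Hray 0%Z ltac:(lia)). rewrite shift_0 in Hray; auto.
  - exact (free_ray_outside _ _ (opp_dir_dirs d Hd) Hray).
Qed.

(* A hole is charged to the first tile met from it in direction [d], a line to
   its first tile in direction [d]; these tiles are exposed and distinct. *)
Lemma exposed_length_lower reps d : In d dirs -> hole_reps reps ->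
  length reps + length (lines d) <= length (exposed d).
Proof.
  intros Hd (Hnd & Hholes & Hdistinct).
  set (items := map (@inl cell Z) reps ++ map (@inr cell Z) (lines d)).
  assert (Hreps : forall r, In (inl r) items -> In r reps).
  { intros r Hr. apply in_app_or in Hr as [Hr|Hr]; apply in_map_iff in Hr;
      destruct Hr as [x [Hx Hin]]; [injection Hx as ->; auto | discriminate]. }
  assert (Hlines : forall z, In (inr z) items -> In z (lines d)).
  { intros z Hz. apply in_app_or in Hz as [Hz|Hz]; apply in_map_iff in Hz;
      destruct Hz as [x [Hx Hin]]; [discriminate | injection Hx as ->; auto]. }
  replace (length reps + length (lines d)) with (length items)
    by (unfold items; rewrite length_app, !length_map; auto).
  apply (NoDup_length_le_rel cell_eq_dec items (exposed d)
           (fun x p => match x with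
                       | inl r => cconn P r (shift p (-1) d)
                       | inr z => line_of d p = z /\ outside (shift p (-1) d)
                       end)).
  - apply NoDup_app.
    + apply Injective_map_NoDup; auto. intros a b H; injection H; auto.
    + apply Injective_map_NoDup; [intros a b H; injection H; auto | apply NoDup_nodup].
    + intros x H1 H2. apply in_map_iff in H1 as [? [<- _]]. apply in_map_iff in H2 as [? [? _]].
      discriminate.
  - intros [r|z] Hx.
    + apply hole_exposes; auto.
    + apply line_exposes; auto.
  - intros [r|z] [r'|z'] p Hx Hx' H1 H2.
    + f_equal. apply Hdistinct; auto. eapply rt_trans; [exact H1 | apply cconn_sym; auto].
    + exfalso. destruct H2 as [_ H2]. apply (H2 r); auto.
    + exfalso. destruct H1 as [_ H1]. apply (H1 r'); auto.
    + destruct H1 as [<- _], H2 as [<- _]; auto.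
Qed.

Lemma covered_sum : NoDup P ->
  lsum (fun d => length (covered d)) dirs = degsum adjb P.
Proof.
  intros Hnd. unfold covered, degsum. simpl lsum at 1. rewrite !length_filter_lsum.
  rewrite Nat.add_0_r, <- !lsum_plus. apply lsum_ext; intros p _.
  rewrite (lsum_ext _ _ P (fun q _ => adjb_as_shifts p q)). simpl lsum at 2.
  rewrite !lsum_plus, lsum_0, !lsum_cell_eqb by auto. lia.
Qed.

Definition columns : list Z := nodup Z.eq_dec (map fst P).
Definition rows : list Z := nodup Z.eq_dec (map snd P).

(* [4 * length P - degsum adjb P] is the perimeter. *)
Lemma perimeter_lower reps : NoDup P -> hole_reps reps ->
  4 * length reps + 2 * length columns + 2 * length rows + degsum adjb P <= 4 * length P.
Proof.
  intros Hnd Hreps.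
  assert (Hd : forall d, In d dirs ->
            length reps + length (lines d) + length (covered d) <= length P).
  { intros d Hdir. pose proof (exposed_length_lower reps d Hdir Hreps).
    pose proof (filter_length (fun p => memb (shift p (-1) d) P) P).
    unfold exposed, covered in *. lia. }
  pose proof (covered_sum Hnd) as Hsum. simpl in Hsum.
  pose proof (Hd (1, 0)%Z ltac:(simpl; auto)). pose proof (Hd (-1, 0)%Z ltac:(simpl; auto)).
  pose proof (Hd (0, 1)%Z ltac:(simpl; auto)). pose proof (Hd (0, -1)%Z ltac:(simpl; auto)).
  change (lines (1, 0)%Z) with rows in *. change (lines (-1, 0)%Z) with rows in *.
  change (lines (0, 1)%Z) with columns in *. change (lines (0, -1)%Z) with columns in *.
  lia.
Qed.

Lemma tile_in_box p : In p P -> In (fst p) columns /\ In (snd p) rows.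
Proof. intros H; split; apply nodup_In, in_map; auto. Qed.

Lemma hole_in_box r : in_hole P r -> In (fst r) columns /\ In (snd r) rows.
Proof.
  intros Hr. split.
  - destruct (first_tile_on_ray r (0, 1)%Z ltac:(simpl; auto) Hr) as [j [_ [Hin _]]].
    apply tile_in_box in Hin as [Hin _]. unfold shift in Hin; simpl in Hin.
    rewrite Z.mul_0_r, Z.add_0_r in Hin; auto.
  - destruct (first_tile_on_ray r (1, 0)%Z ltac:(simpl; auto) Hr) as [j [_ [Hin _]]].
    apply tile_in_box in Hin as [_ Hin]. unfold shift in Hin; simpl in Hin.
    rewrite Z.mul_0_r, Z.add_0_r in Hin; auto.
Qed.

Lemma box_contains reps : hole_reps reps -> incl (P ++ reps) (list_prod columns rows).
Proof.
  intros (_ & Hholes & _) [x y] Hc. apply in_prod_iff.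
  apply in_app_or in Hc as [Hc|Hc].
  - exact (tile_in_box (x, y) Hc).
  - exact (hole_in_box (x, y) (Hholes _ Hc)).
Qed.

Lemma NoDup_tiles_holes reps : NoDup P -> hole_reps reps -> NoDup (P ++ reps).
Proof.
  intros Hnd (Hndr & Hholes & _). apply NoDup_app; auto.
  intros c Hc Hc'. destruct (Hholes c Hc'); contradiction.
Qed.

Lemma box_area_lower reps : NoDup P -> hole_reps reps ->
  length P + length reps <= length columns * length rows.
Proof.
  intros Hnd Hreps.
  pose proof (NoDup_incl_length (NoDup_tiles_holes reps Hnd Hreps) (box_contains reps Hreps)).
  unfold cell in *. rewrite length_app, length_prod in *. auto.
Qed.

Section Connected.
Hypothesis HP : polyomino P.

Let P_nonempty : P <> [] := proj1 HP.
Let P_nodup : NoDup P := proj1 (proj2 HP).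

Lemma polyomino_connected : connected_by adjb P.
Proof.
  pose proof HP as (_ & _ & Hc). intros u v Hu Hv.
  specialize (Hc u v Hu Hv). clear Hu Hv.
  induction Hc as [x y (Hx & Hy & Hxy)| |]; [|apply rt_refl | eapply rt_trans; eauto].
  apply rt_step; repeat split; auto. apply (reflect_iff _ _ (adjb_spec x y)); auto.
Qed.

Lemma polyomino_degsum : 2 * (length P - 1) <= degsum adjb P.
Proof. apply (degsum_connected adjb adjb_sym); [apply P_nodup | apply polyomino_connected]. Qed.

Lemma drop_edge_segment a b c d L : In d dirs -> (0 <= L)%Z ->
  (forall j, (0 <= j <= L)%Z -> In (shift c j d) P) ->
  (forall j, (0 < j <= L)%Z -> shift c j d <> a /\ shift c j d <> b) ->
  clos_refl_trans cell (edge_in (drop_edge cell_eqb adjb a b) P) c (shift c L d).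
Proof.
  intros Hd HL Hin Hab. apply segment_path; auto.
  intros j Hj. destruct (Hab (j + 1)%Z ltac:(lia)) as [Ha Hb].
  repeat split; [apply Hin; lia | apply Hin; lia |].
  unfold drop_edge. rewrite (proj1 (reflect_iff _ _ (adjb_spec _ _)) (adj_shift d c j Hd)).
  destruct (is_pair_spec cell_eqb cell_eqb_spec a b (shift c j d) (shift c (j + 1) d))
    as [[[_ E]|[_ E]]|]; [contradiction | contradiction | reflexivity].
Qed.

Local Ltac border_side Hborder d L :=
  match goal with |- clos_refl_trans _ _ ?c ?e =>
    replace e with (shift c L d) by (unfold shift; simpl; f_equal; lia);
    apply drop_edge_segment;
    [ simpl; auto | lia
    | intros j Hj; apply Hborder; unfold shift; simpl; lia
    | intros j Hj; unfold shift; simpl; split; intros E; injection E; lia ]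
  end.

(* The border of the rectangle is a cycle through the edge from (x0, y0) to
   (x0 + 1, y0). *)
Lemma border_degsum x0 x1 y0 y1 : (x0 < x1)%Z -> (y0 < y1)%Z ->
  (forall x y, (x0 <= x <= x1)%Z -> (y0 <= y <= y1)%Z ->
     (x = x0 \/ x = x1 \/ y = y0 \/ y = y1) -> In (x, y) P) ->
  2 * length P <= degsum adjb P.
Proof.
  intros Hx Hy Hborder.
  set (R := edge_in (drop_edge cell_eqb adjb (x0, y0) (x0 + 1, y0)%Z) P).
  assert (Hsym : symmetric cell R)
    by apply edge_in_sym, (drop_edge_sym cell_eqb cell_eqb_spec adjb adjb_sym).
  assert (Hleft : clos_refl_trans cell R (x0, y0) (x0, y1))
    by border_side Hborder (0, 1)%Z (y1 - y0)%Z.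
  assert (Htop : clos_refl_trans cell R (x0, y1) (x1, y1))
    by border_side Hborder (1, 0)%Z (x1 - x0)%Z.
  assert (Hright : clos_refl_trans cell R (x1, y0) (x1, y1))
    by border_side Hborder (0, 1)%Z (y1 - y0)%Z.
  assert (Hbottom : clos_refl_trans cell R (x0 + 1, y0)%Z (x1, y0))
    by border_side Hborder (1, 0)%Z (x1 - x0 - 1)%Z.
  apply (degsum_cycle cell_eqb cell_eqb_spec adjb adjb_sym P (x0, y0) (x0 + 1, y0)%Z).
  - apply P_nodup.
  - apply polyomino_connected.
  - apply Hborder; lia.
  - apply Hborder; lia.
  - intros E; injection E; lia.
  - apply (reflect_iff _ _ (adjb_spec _ _)). unfold adj; simpl; lia.
  - eapply rt_trans; [exact Hleft|]. eapply rt_trans; [exact Htop|].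
    eapply rt_trans; apply rt_sym; eauto.
Qed.

Lemma coord_interval (g : cell -> Z) p q z :
  (forall x y, adj x y -> (Z.abs (g x - g y) <= 1)%Z) -> In p P -> In q P ->
  (g p <= z <= g q)%Z -> exists c, In c P /\ g c = z.
Proof.
  pose proof HP as (_ & _ & Hc). intros Hg Hp Hq Hz.
  assert (Hpath : forall u v,
            clos_refl_trans_1n cell (fun x y => In x P /\ In y P /\ adj x y) u v ->
            In u P -> forall z, (Z.min (g u) (g v) <= z <= Z.max (g u) (g v))%Z ->
            exists c, In c P /\ g c = z).
  { intros u v H. induction H as [u|u v w [_ [Hv Huv]] _ IH]; intros Hu z' Hz'.
    - exists u; split; auto; lia.
    - destruct (Z.eq_dec z' (g u)) as [->|Hne]; [exists u; auto|].
      apply IH; auto. specialize (Hg _ _ Huv). lia. }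
  apply (Hpath p q); [apply clos_rt_rt1n, Hc | |]; auto; lia.
Qed.

Lemma hole_inside_box h x0 x1 y0 y1 : in_hole P h ->
  (forall p, In p P -> (x0 <= fst p <= x1)%Z /\ (y0 <= snd p <= y1)%Z) ->
  (x0 < fst h < x1)%Z /\ (y0 < snd h < y1)%Z.
Proof.
  intros Hh Hbox.
  destruct (hole_tile_beyond h (1, 0)%Z ltac:(simpl; auto) Hh) as [p1 [Hp1 H1]].
  destruct (hole_tile_beyond h (-1, 0)%Z ltac:(simpl; auto) Hh) as [p2 [Hp2 H2]].
  destruct (hole_tile_beyond h (0, 1)%Z ltac:(simpl; auto) Hh) as [p3 [Hp3 H3]].
  destruct (hole_tile_beyond h (0, -1)%Z ltac:(simpl; auto) Hh) as [p4 [Hp4 H4]].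
  pose proof (Hbox p1 Hp1). pose proof (Hbox p2 Hp2).
  pose proof (Hbox p3 Hp3). pose proof (Hbox p4 Hp4).
  unfold pos_along in *; simpl in *. lia.
Qed.

Lemma filled_box_border reps : hole_reps reps -> reps <> [] ->
  incl (list_prod columns rows) (P ++ reps) ->
  exists x0 x1 y0 y1, (x0 < x1)%Z /\ (y0 < y1)%Z /\
    forall x y, (x0 <= x <= x1)%Z -> (y0 <= y <= y1)%Z ->
      (x = x0 \/ x = x1 \/ y = y0 \/ y = y1) -> In (x, y) P.
Proof.
  intros (_ & Hholes & _) Hne Hfill.
  destruct (exists_min_Z fst P P_nonempty) as [pl [Hpl Hl]].
  destruct (exists_min_Z (fun c => - fst c)%Z P P_nonempty) as [pr [Hpr Hr]].
  destruct (exists_min_Z snd P P_nonempty) as [pb [Hpb Hb]].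
  destruct (exists_min_Z (fun c => - snd c)%Z P P_nonempty) as [pt [Hpt Ht]].
  assert (Hbox : forall p, In p P ->
            (fst pl <= fst p <= fst pr)%Z /\ (snd pb <= snd p <= snd pt)%Z).
  { intros p Hp. specialize (Hl p Hp). specialize (Hr p Hp).
    specialize (Hb p Hp). specialize (Ht p Hp). lia. }
  destruct reps as [|h reps']; [congruence|].
  destruct (hole_inside_box h _ _ _ _ (Hholes h (or_introl eq_refl)) Hbox).
  exists (fst pl), (fst pr), (snd pb), (snd pt). split; [lia | split; [lia|]].
  intros x y Hx Hy Hside.
  assert (Hcol : In x columns).
  { destruct (coord_interval fst pl pr x) as [c [Hc <-]]; auto.
    - unfold adj; intros; lia.
    - apply tile_in_box; auto. }
  assert (Hrow : In y rows).
  { destruct (coord_interval snd pb pt y) as [c [Hc <-]]; auto.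
    - unfold adj; intros; lia.
    - apply tile_in_box; auto. }
  destruct (in_app_or _ _ _ (Hfill (x, y) (in_prod _ _ _ _ Hcol Hrow))) as [Hin|Hin]; auto.
  destruct (hole_inside_box (x, y) _ _ _ _ (Hholes _ Hin) Hbox). simpl in *. lia.
Qed.

Section Counts.
Variable reps : list cell.
Hypothesis Hreps : hole_reps reps.

Lemma perimeter_connected :
  4 * length reps + 2 * length columns + 2 * length rows + 2 * (length P - 1)
  <= 4 * length P.
Proof.
  pose proof (perimeter_lower reps P_nodup Hreps).
  pose proof polyomino_degsum. lia.
Qed.

Lemma perimeter_filled_box : reps <> [] ->
  length P + length reps = length columns * length rows ->
  4 * length reps + 2 * length columns + 2 * length rows + 2 * length P
  <= 4 * length P.
Proof.
  intros Hne Hfull.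
  assert (Hfill : incl (list_prod columns rows) (P ++ reps)).
  { apply NoDup_length_incl;
      [apply NoDup_tiles_holes; auto | | apply box_contains; auto].
    unfold cell in *. rewrite length_prod, length_app. lia. }
  destruct (filled_box_border reps Hreps Hne Hfill)
    as (x0 & x1 & y0 & y1 & Hx & Hy & Hborder).
  pose proof (border_degsum x0 x1 y0 y1 Hx Hy Hborder).
  pose proof (perimeter_lower reps P_nodup Hreps). lia.
Qed.

End Counts.
End Connected.
End Polyomino.

Definition ceil2sqrt (a : nat) : Z := ceilR (2 * sqrt (INR a)).

Lemma ceil2sqrt_le a K : 4 * a <= K * K -> (ceil2sqrt a <= Z.of_nat K)%Z.
Proof.
  intros H. unfold ceil2sqrt, ceilR.
  destruct (archimed (- (2 * sqrt (INR a)))) as [Hup _].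
  assert (Hs : (2 * sqrt (INR a) <= INR K)%R).
  { assert (Ha : (INR a <= (INR K / 2) * (INR K / 2))%R).
    { apply le_INR in H. rewrite !mult_INR in H.
      replace (INR 4) with 4%R in H by (simpl; lra). nra. }
    assert (HK : (0 <= INR K / 2)%R) by (pose proof (pos_INR K); lra).
    pose proof (sqrt_le_1_alt _ _ Ha) as Hq. rewrite sqrt_square in Hq; auto. lra. }
  rewrite (INR_IZR_INZ K) in Hs.
  assert (Hlt : (IZR (- Z.of_nat K) < IZR (up (- (2 * sqrt (INR a)))))%R)
    by (rewrite opp_IZR; lra).
  apply lt_IZR in Hlt. lia.
Qed.

Lemma ceil2sqrt_le_add a X Y : a <= X * Y -> (ceil2sqrt a <= Z.of_nat (X + Y))%Z.
Proof.
  intros H. apply ceil2sqrt_le.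
  pose proof (Z.square_nonneg (Z.of_nat X - Z.of_nat Y)).
  nia.
Qed.

Lemma M_ge_iff n h :
  (M n h >= INR h)%R <-> (ceil2sqrt (n + h) <= Z.of_nat n + 1 - 2 * Z.of_nat h)%Z.
Proof.
  unfold M. change (ceilR (2 * sqrt (INR (n + h)))) with (ceil2sqrt (n + h)).
  rewrite !INR_IZR_INZ. split; intros H.
  - apply le_IZR. rewrite minus_IZR, plus_IZR, mult_IZR. simpl (IZR 1). simpl (IZR 2). lra.
  - apply IZR_le in H. rewrite minus_IZR, plus_IZR, mult_IZR in H.
    simpl (IZR 1) in H. simpl (IZR 2) in H. lra.
Qed.

Lemma m_spec h : 1 <= m h /\ (M (m h) h >= INR h)%R /\
  forall n, 1 <= n -> (M n h >= INR h)%R -> m h <= n.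
Proof.
  unfold m. apply epsilon_spec.
  destruct (nat_least (fun n => 1 <= n /\ (M n h >= INR h)%R)) as [n [[Hn1 Hn2] Hmin]].
  { (* 4 (7h + 3) <= (4h + 4)^2 *)
    exists (6 * h + 3). split; [lia|]. apply M_ge_iff.
    pose proof (ceil2sqrt_le (6 * h + 3 + h) (4 * h + 4) ltac:(nia)). lia. }
  exists n; split; [|split]; auto.
Qed.

Lemma m_1_le : m 1 <= 8.
Proof.
  destruct (m_spec 1) as [_ [_ Hmin]]. apply Hmin; [lia|]. apply M_ge_iff.
  pose proof (ceil2sqrt_le (8 + 1) 6 ltac:(lia)). lia.
Qed.

Lemma t_spec alpha : 9 <= alpha ->
  1 <= t alpha /\ m (t alpha) + t alpha <= alpha /\
  forall h, 1 <= h -> m h + h <= alpha -> h <= t alpha.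
Proof.
  intros Ha. unfold t. apply epsilon_spec.
  destruct (nat_greatest (fun h => 1 <= h /\ m h + h <= alpha) alpha)
    as [s [[Hs1 Hs2] Hmax]].
  - exists 1. pose proof m_1_le. lia.
  - intros h [_ Hh]; lia.
  - exists s; split; [|split]; auto.
Qed.

Lemma m_le_tiles P k : polyomino P -> has_holes P k -> m k <= length P.
Proof.
  intros HP Hh. pose proof HP as (HPne & Hnd & _).
  destruct (has_holes_reps P k Hh) as [reps [<- Hreps]].
  destruct (m_spec (length reps)) as [_ [_ Hmin]].
  apply Hmin; [destruct P; [congruence | simpl; lia] |]. apply M_ge_iff.
  pose proof (perimeter_connected P HP reps Hreps).
  pose proof (ceil2sqrt_le_add _ _ _ (box_area_lower P reps Hnd Hreps)).
  lia.
Qed.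

(* 4XY <= (X + Y)^2 <= (N + w)^2 <= 4Nw + 1 *)
Lemma area_le_near_square N w X Y : (w = N \/ w = N + 1) ->
  (Z.of_nat (X + Y) <= ceil2sqrt (N * w - 1))%Z -> X * Y <= N * w.
Proof.
  intros Hw Hsum.
  assert (Hle : X + Y <= N + w).
  { pose proof (ceil2sqrt_le (N * w - 1) (N + w) ltac:(destruct Hw; subst; nia)). lia. }
  pose proof (Z.square_nonneg (Z.of_nat X - Z.of_nat Y)).
  destruct Hw; subst; nia.
Qed.

Lemma no_polyomino_with_m_t_tiles N w P : (w = N \/ w = N + 1) -> 9 <= N * w ->
  m (t (N * w)) + t (N * w) = N * w ->
  polyomino P -> has_holes P (t (N * w)) -> length P <> m (t (N * w)).
Proof.
  intros Hw H9 Heq HP Hh Hn. pose proof HP as (_ & Hnd & _).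
  destruct (t_spec _ H9) as [Ht1 _].
  destruct (m_spec (t (N * w))) as [_ [_ Hmin]].
  destruct (has_holes_reps P _ Hh) as [reps [Hk Hreps]].
  pose proof (perimeter_connected P HP reps Hreps) as Hper.
  pose proof (box_area_lower P reps Hnd Hreps) as Harea.
  set (k := t (N * w)) in *. set (n := length P) in *.
  set (X := length (columns P)) in *. set (Y := length (rows P)) in *.
  assert (HX : 1 <= X) by nia. assert (HY : 1 <= Y) by nia.
  assert (Hbelow_m : (Z.of_nat n - 2 * Z.of_nat k < ceil2sqrt (N * w - 1))%Z).
  { assert (HM : ~ (M (n - 1) k >= INR k)%R).
    { intros HM. specialize (Hmin (n - 1) ltac:(lia) HM). lia. }
    rewrite M_ge_iff in HM. replace (n - 1 + k) with (N * w - 1) in HM by lia. lia. }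
  assert (Hfull : n + length reps = X * Y).
  { pose proof (area_le_near_square N w X Y Hw ltac:(lia)). lia. }
  assert (Hne : reps <> []) by (intros ->; simpl in Hk; lia).
  pose proof (perimeter_filled_box P HP reps Hreps Hne Hfull).
  pose proof (ceil2sqrt_le_add (N * w - 1) X Y ltac:(lia)).
  lia.
Qed.

Lemma length_nodup_map_range {A : Type} (f : A -> Z) (l : list A) (n : nat) :
  (forall x, In x l -> (0 <= f x < Z.of_nat n)%Z) -> length (nodup Z.eq_dec (map f l)) <= n.
Proof.
  intros Hf. rewrite <- (length_seq n 0), <- (length_map Z.of_nat).
  apply NoDup_incl_length; [apply NoDup_nodup|]. intros z Hz.
  apply nodup_In, in_map_iff in Hz as [x [<- Hx]]. specialize (Hf x Hx).
  apply in_map_iff. exists (Z.to_nat (f x)). split; [lia | apply in_seq; lia].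
Qed.

Lemma box_le_rect a b P : in_rect a b P -> length (columns P) <= a /\ length (rows P) <= b.
Proof. intros Hr. split; apply length_nodup_map_range; intros p Hp; apply Hr, Hp. Qed.

Lemma tiles_holes_le_rect a b P k : polyomino P -> in_rect a b P -> has_holes P k ->
  length P + k <= a * b.
Proof.
  intros (_ & Hnd & _) Hr Hh. destruct (has_holes_reps P k Hh) as [reps [<- Hreps]].
  pose proof (box_area_lower P reps Hnd Hreps).
  destruct (box_le_rect a b P Hr). nia.
Qed.

Theorem lemma6 (N w alpha : nat) :
  (1 <= N)%nat -> (w = N \/ w = (N + 1)%nat) -> alpha = (N * w)%nat ->
  (9 <= alpha)%nat ->
  (m (t alpha) + t alpha = alpha)%nat ->
  (forall P, polyomino P -> has_holes P (t alpha) -> (m (t alpha) < tiles P)%nat) /\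
  (forall P k, polyomino P -> in_rect N w P -> has_holes P k -> (k <= t alpha - 1)%nat).
Proof.
  intros _ Hw -> H9 Heq.
  destruct (t_spec _ H9) as [_ [_ Htmax]].
  split.
  - intros P HP Hh. unfold tiles.
    pose proof (m_le_tiles P _ HP Hh).
    pose proof (no_polyomino_with_m_t_tiles N w P Hw H9 Heq HP Hh). lia.
  - intros P k HP Hr Hh.
    pose proof (m_le_tiles P k HP Hh).
    pose proof (tiles_holes_le_rect N w P k HP Hr Hh).
    destruct (Nat.le_gt_cases k (t (N * w) - 1)) as [|Hk]; auto. exfalso.
    assert (k = t (N * w)) as -> by (specialize (Htmax k ltac:(lia) ltac:(lia)); lia).
    apply (no_polyomino_with_m_t_tiles N w P Hw H9 Heq HP Hh). lia.
Qed.
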